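(* Let $\Gamma$ be a graph with maximum degree $\Delta_\Gamma$, and let $V^*\subseteq V(\Gamma)$ be a random vertex set containing each vertex of $\Gamma$ independently with probability $q\le 1/\Delta_\Gamma$. Then with probability at least $1-\exp\!\big(-q^2e(\Gamma)/200\big)$, the induced subgraph $\Gamma[V^*]$ contains a matching of size at least $q^2e(\Gamma)/20$.
   Context: $e(\Gamma)$ denotes the number of edges of $\Gamma$. *)

From mathcomp Require Import all_boot all_order all_algebra.
From mathcomp Require Import reals.
From mathcomp Require Import sequences exp.
Set Implicit Arguments. Unset Strict Implicit. Unset Printing Implicit Defensive.
Import Order.TTheory GRing.Theory Num.Theory.
Local Open Scope ring_scope.

(* A finite simple graph is a symmetric irreflexive relation e on a finType T. *)

Definition edges (T : finType) (e : rel T) : {set {set T}} :=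
  [set A : {set T} | [exists x, exists y, e x y && (A == [set x; y])]].

Definition nedges (T : finType) (e : rel T) : nat := #|edges e|.

Definition deg (T : finType) (e : rel T) (v : T) : nat := #|[set u | e v u]|.
Definition maxdeg (T : finType) (e : rel T) : nat := (\max_(v : T) deg e v)%N.

Definition is_matching_in (T : finType) (e : rel T) (S : {set T})
    (M : {set {set T}}) : bool :=
  [&& M \subset edges e, [forall A in M, A \subset S] & trivIset M].

Definition has_matching_ge (R : realType) (T : finType) (e : rel T)
    (S : {set T}) (x : R) : bool :=
  [exists M : {set {set T}}, is_matching_in e S M && (x <= (#|M|%:R : R))].

(* Probability that the random set V* (each vertex independently with prob. q)
   equals S. *)
Definition pr_set (R : realType) (T : finType) (q : R) (S : {set T}) : R :=
  (\prod_(v in S) q) * (\prod_(v in ~: S) (1 - q)).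

Definition prob_event (R : realType) (T : finType) (q : R)
    (E : pred {set T}) : R :=
  \sum_(S : {set T} | E S) pr_set q S.

(* Reveal the vertices one at a time and run the online greedy matching on V*:
   a revealed vertex of V* is matched to an available (revealed, unmatched)
   neighbour if it has one, and otherwise becomes available itself.  Call an
   unrevealed vertex hot if it has an available neighbour and cold otherwise,
   and put  Phi = q/6 #hot + q^2/32 #{ordered adjacent pairs of cold vertices}.
   Revealing a vertex either matches it (prob. q, hot case), makes its cold
   neighbours hot (prob. q, cold case), or discards it; since q Delta <= 1 the
   resulting loss of Phi is small enough that exp(-r/2 - Phi) is a
   supermartingale, r being the number of matched edges.  Hence
   E[exp(-r/2)] <= exp(-Phi_0) <= exp(-q^2 e/32), and Markov's inequality for
   exp(-r/2) bounds P(r < q^2 e/20) by exp(q^2 e/40 - q^2 e/32) <= exp(-q^2 e/200). *)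

From mathcomp Require Import all_boot all_order all_algebra.
From mathcomp Require Import reals.
From mathcomp Require Import sequences exp.
From mathcomp Require Import ring lra.
Set Implicit Arguments. Unset Strict Implicit. Unset Printing Implicit Defensive.
Import Order.TTheory GRing.Theory Num.Theory.
Local Open Scope ring_scope.

Section BernoulliExpectation.
Variables (R : comPzRingType) (T : finType) (q : R).

Definition bern_prob (K S : {set T}) : R := q ^+ #|S| * (1 - q) ^+ #|K :\: S|.

Definition bern_expect (K : {set T}) (f : {set T} -> R) : R :=
  \sum_(S : {set T} | S \subset K) bern_prob K S * f S.

Lemma eq_bern_expect (K : {set T}) (f g : {set T} -> R) :
  (forall S : {set T}, S \subset K -> f S = g S) -> bern_expect K f = bern_expect K g.
Proof. by move=> fg; apply: eq_bigr => S SK; rewrite fg. Qed.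

Lemma bern_expectZ (K : {set T}) (c : R) (f : {set T} -> R) :
  bern_expect K (fun S => c * f S) = c * bern_expect K f.
Proof. by rewrite /bern_expect mulr_sumr; apply: eq_bigr => S _; rewrite mulrCA. Qed.

Lemma bern_expect0 (f : {set T} -> R) : bern_expect set0 f = f set0.
Proof.
rewrite /bern_expect (big_pred1 set0) => [|S]; last by rewrite subset0.
by rewrite /bern_prob setD0 cards0 !expr0 !mul1r.
Qed.

Lemma bern_expectU1 (K : {set T}) (w : T) (f : {set T} -> R) : w \notin K ->
  bern_expect (w |: K) f =
  q * bern_expect K (fun S => f (w |: S)) + (1 - q) * bern_expect K f.
Proof.
move=> wK; rewrite /bern_expect (bigID (fun S : {set T} => w \in S)) /=.
congr (_ + _); rewrite mulr_sumr.
  rewrite (reindex_onto (fun S => w |: S) (fun S => S :\ w)) => [|S /andP[_ wS]]; last first.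
    by rewrite setD1K.
  apply: eq_big => [S|S /andP[_ /eqP wSS]].
    rewrite setU11 andbT; apply/andP/idP => [[sub /eqP <-]|SK].
      by rewrite -(setU1K wK); apply: setSD.
    have wS : w \notin S by apply: contra wK; apply: (subsetP SK).
    by rewrite setUS // setU1K.
  have wS : w \notin S by rewrite -wSS setD11.
  rewrite /bern_prob; have -> : (w |: K) :\: (w |: S) = K :\: S.
    by apply/setP => x; rewrite !inE; case: eqVneq => // ->; rewrite (negbTE wK) andbF.
  by rewrite cardsU1 wS exprS -!mulrA.
apply: eq_big => [S|S /andP[_ wS]]; first by rewrite -{2}(setU1K wK) subsetD1.
rewrite /bern_prob; have -> : (w |: K) :\: S = w |: (K :\: S).
  by apply/setP => x; rewrite !inE; case: eqVneq => // ->; rewrite wS.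
by rewrite cardsU1 !inE (negbTE wK) andbF add1n exprS mulrCA -!mulrA.
Qed.

Lemma bern_expect1 (K : {set T}) : bern_expect K (fun=> 1) = 1.
Proof.
elim: {K}#|K| {-2}K (erefl #|K|) => [|n IH] K.
  by move/eqP; rewrite cards_eq0 => /eqP ->; rewrite bern_expect0.
move=> cK; have /set0Pn[w wK] : K != set0 by rewrite -card_gt0 cK.
have cKw : #|K :\ w| = n by move: cK; rewrite (cardsD1 w) wK => -[].
by rewrite -(setD1K wK) bern_expectU1 ?setD11 // !IH // !mulr1 addrC subrK.
Qed.

End BernoulliExpectation.

Section ExponentialMarkov.
Variables (R : realType) (T : finType) (q : R).
Hypotheses (q_ge0 : 0 <= q) (q_le1 : q <= 1).

Lemma pr_setE (S : {set T}) : pr_set q S = bern_prob q setT S.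
Proof. by rewrite /pr_set /bern_prob !prodr_const setTD. Qed.

Lemma prob_event_ge_markov (E : pred {set T}) (X : {set T} -> R) (a : R) :
  (forall S, a <= X S -> E S) ->
  1 - expR a * bern_expect q setT (fun S => expR (- X S)) <= prob_event q E.
Proof.
move=> XE; have pr_ge0 S : 0 <= pr_set q S.
  by rewrite /pr_set mulr_ge0 // prodr_ge0 // => v _; rewrite subr_ge0.
have mass : \sum_(S : {set T}) pr_set q S = 1.
  rewrite -(@bern_expect1 R T q setT) /bern_expect.
  by apply: eq_big => [S|S _]; rewrite ?subsetT // pr_setE mulr1.
rewrite (bigID E) /= in mass.
rewrite /prob_event -{1}mass -addrA gerDl subr_le0 big_mkcond /= /bern_expect mulr_sumr.
rewrite [X in _ <= X](eq_bigl predT) => [|S]; last by rewrite subsetT.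
apply: ler_sum => S _; rewrite -pr_setE mulrCA -expRD.
case: ifPn => [nES|_]; last by rewrite mulr_ge0 ?expR_ge0.
rewrite ler_peMr // -expR0 ler_expR subr_ge0 ltW //.
by rewrite ltNge; apply: contra nES => /XE.
Qed.

End ExponentialMarkov.

Section GreedyMatching.
Variables (T : finType) (e : rel T).
Local Open Scope nat_scope.

(* Online greedy matching on the vertices of S revealed in the order of s; U
   holds the revealed vertices of S that are still unmatched. *)
Fixpoint greedy_size (s : seq T) (U S : {set T}) : nat :=
  if s is w :: s' then
    if w \in S then
      if [pick u in U | e w u] is Some u then (greedy_size s' (U :\ u) S).+1
      else greedy_size s' (w |: U) S
    else greedy_size s' U S
  else 0.

Lemma greedy_sizeU1 (s : seq T) (U S : {set T}) (x : T) :
  x \notin s -> greedy_size s U (x |: S) = greedy_size s U S.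
Proof.
elim: s U => //= w s IH U; rewrite inE negb_or => /andP[xw xs].
rewrite in_setU1 eq_sym (negbTE xw) /=.
by case: (w \in S) => //; case: [pick u in U | e w u] => [u|]; rewrite IH.
Qed.

Lemma set0_notin_edges : set0 \notin edges e.
Proof.
rewrite inE; apply/existsPn => x; apply/existsPn => y.
by rewrite negb_and; apply/orP; right; apply/eqP/setP => /(_ x); rewrite !inE eqxx.
Qed.

Lemma is_matching_in0 (S : {set T}) : is_matching_in e S set0.
Proof.
apply/and3P; split; [exact: sub0set | by apply/forall_inP => B; rewrite inE |].
exact: trivIsetS (sub0set _) (trivIset1 set0).
Qed.

Lemma is_matching_inU1 (S : {set T}) (M : {set {set T}}) (w u : T) :
  is_matching_in e S M -> e w u -> w \in S -> u \in S ->
  {in M, forall B : {set T}, [disjoint [set w; u] & B]} ->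
  is_matching_in e S ([set w; u] |: M) /\ #|[set w; u] |: M| = #|M|.+1.
Proof.
move=> /and3P[ME MS Mtriv] ewu wS uS dis.
have M0 : set0 \notin M by apply: contra set0_notin_edges; apply: (subsetP ME).
have [Mtriv' wuM] := trivIsetU1 dis Mtriv M0.
split; last by rewrite cardsU1 wuM.
apply/and3P; split => //.
  rewrite subUset ME andbT sub1set inE.
  by apply/existsP; exists w; apply/existsP; exists u; rewrite ewu eqxx.
apply/forall_inP => B; rewrite in_setU1 => /predU1P[->|BM]; last exact: (forall_inP MS).
by rewrite subUset !sub1set wS uS.
Qed.

Lemma greedy_size_matching (s : seq T) (U S : {set T}) :
  uniq s -> U \subset S -> [disjoint s & U] ->
  exists M, [/\ is_matching_in e S M, #|M| = greedy_size s U S &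
                {in M, forall B : {set T}, B \subset U :|: [set:: s]}].
Proof.
elim: s U => [|w s IH] U.
  move=> *; exists set0; split; [exact: is_matching_in0 | by rewrite cards0 |].
  by move=> B; rewrite inE.
rewrite cons_uniq disjoint_cons [greedy_size _ U S]/= => /andP[ws uniq_s] US /andP[wU sU].
have blocks_widen (M : {set {set T}}) (V : {set T}) : V \subset w |: U ->
    {in M, forall B : {set T}, B \subset V :|: [set:: s]} ->
    {in M, forall B : {set T}, B \subset U :|: [set:: w :: s]}.
  move=> VU MV B /MV BV; apply: subset_trans BV _.
  by rewrite set_cons setUA [U :|: _]setUC setSU.
have [wS|wS] := boolP (w \in S); last first.
  have [M [MS <- MB]] := IH U uniq_s US sU.
  by exists M; split => //; apply: blocks_widen MB; apply: subsetU1.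
case: pickP => [u /andP[uU ewu]|noU].
  have [||M [MS <- MB]] := IH (U :\ u) uniq_s.
  - exact: subset_trans (subD1set U u) US.
  - exact: disjointWr (subD1set U u) sU.
  have uS : u \in S := subsetP US u uU.
  have dis : {in M, forall B : {set T}, [disjoint [set w; u] & B]}.
    move=> B /MB BUs; apply: disjointWr BUs _.
    rewrite disjoints_subset subUset !sub1set !inE (negbTE wU) (negbTE ws).
    by rewrite (disjointFl sU uU) eqxx !andbF.
  have [MS' cardM'] := is_matching_inU1 MS ewu wS uS dis.
  exists ([set w; u] |: M); split => //.
  move=> B; rewrite in_setU1 => /predU1P[->|BM].
    by rewrite subUset !sub1set !inE uU eqxx orbT.
  by apply: (blocks_widen _ _ _ MB _ BM); rewrite (subset_trans (subD1set U u)) ?subsetU1.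
have [||M [MS <- MB]] := IH (w |: U) uniq_s.
- by rewrite subUset sub1set wS US.
- rewrite disjoint_has; apply/hasPn => x xs /=.
  rewrite in_setU1 negb_or (disjointFr sU xs) andbT.
  by apply: contraNneq ws => <-.
by exists M; split => //; apply: blocks_widen MB.
Qed.

End GreedyMatching.

Lemma has_matching_ge_greedy (R : realType) (T : finType) (e : rel T)
    (s : seq T) (S : {set T}) (x : R) :
  uniq s -> x <= (greedy_size e s set0 S)%:R -> has_matching_ge e S x.
Proof.
move=> uniq_s x_le; have [|M [matching cardM _]] := greedy_size_matching e uniq_s (sub0set S).
  by rewrite disjoint_has; apply/hasPn => y _; rewrite inE.
by apply/existsP; exists M; rewrite matching cardM.
Qed.

Section HotAndCold.
Variables (T : finType) (e : rel T).
Local Open Scope nat_scope.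

Definition hot (K U : {set T}) : {set T} := [set x in K | [exists u in U, e x u]].
Definition cold (K U : {set T}) : {set T} := [set x in K | ~~ [exists u in U, e x u]].
Definition nbrs_in (F : {set T}) (w : T) : {set T} := [set x in F | e w x].
Definition arcs (X Y : {set T}) : {set T * T} :=
  [set p | [&& p.1 \in X, p.2 \in Y & e p.1 p.2]].

Lemma in_nbrs_in (F : {set T}) (w x : T) : (x \in nbrs_in F w) = (x \in F) && e w x.
Proof. by rewrite inE. Qed.

Lemma hotD1 (K U : {set T}) (w : T) : hot (K :\ w) U = hot K U :\ w.
Proof. by apply/setP => x; rewrite !inE andbA. Qed.

Lemma coldD1 (K U : {set T}) (w : T) : cold (K :\ w) U = cold K U :\ w.
Proof. by apply/setP => x; rewrite !inE andbA. Qed.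

Lemma card_hotD1 (K U : {set T}) (w : T) : #|hot K U| <= (#|hot (K :\ w) U|).+1.
Proof. by rewrite hotD1 (cardsD1 w (hot K U)); case: (w \in _). Qed.

Lemma hot_subD1 (K U : {set T}) (w : T) :
  ~~ [exists u in U, e w u] -> hot K U \subset hot (K :\ w) U.
Proof.
move=> wcold; rewrite hotD1; apply/subsetP => x xH; rewrite in_setD1 xH andbT.
by apply: contraTneq xH => ->; rewrite inE (negbTE wcold) andbF.
Qed.

Lemma cold_subD1 (K U : {set T}) (w : T) :
  [exists u in U, e w u] -> cold K U \subset cold (K :\ w) U.
Proof.
move=> whot; rewrite coldD1; apply/subsetP => x xC; rewrite in_setD1 xC andbT.
by apply: contraTneq xC => ->; rewrite inE whot andbF.
Qed.

Lemma cold_subU (K U V : {set T}) : V \subset U -> cold K U \subset cold K V.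
Proof.
move=> /subsetP VU; apply/subsetP => x; rewrite !inE => /andP[-> xU].
by apply: contra xU => /exists_inP[u /VU uU exu]; apply/exists_inP; exists u.
Qed.

Lemma arcsS (X X' Y Y' : {set T}) :
  X \subset X' -> Y \subset Y' -> arcs X Y \subset arcs X' Y'.
Proof.
move=> /subsetP XX' /subsetP YY'; apply/subsetP => -[a b].
by rewrite !inE => /and3P[/XX' -> /YY' -> ->].
Qed.

Lemma card_arcs (X Y : {set T}) : #|arcs X Y| = (\sum_(x in X) #|nbrs_in Y x|)%N.
Proof.
rewrite (eq_bigr (fun x => \sum_(y | (y \in Y) && e x y) 1)%N); last first.
  by move=> x _; rewrite sum1dep_card; apply: eq_card => y; rewrite !inE.
by rewrite pair_big_dep sum1dep_card; apply: eq_card => p; rewrite !inE andbA.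
Qed.

Lemma deg_le_maxdeg (x : T) : deg e x <= maxdeg e.
Proof. exact: (@leq_bigmax T (fun v => deg e v) x). Qed.

Lemma card_nbrs_in_le_maxdeg (F : {set T}) (x : T) : #|nbrs_in F x| <= maxdeg e.
Proof.
apply: leq_trans (deg_le_maxdeg x); apply: subset_leq_card.
by apply/subsetP => y; rewrite !inE => /andP[].
Qed.

Lemma nedges_le_card_arcs : nedges e <= #|arcs setT setT|.
Proof.
apply: leq_trans (leq_imset_card (fun p : T * T => [set p.1; p.2]) _).
apply/subset_leq_card/subsetP => A; rewrite inE => /existsP[x /existsP[y /andP[exy /eqP ->]]].
by apply/imsetP; exists (x, y); rewrite // !inE.
Qed.

Hypothesis e_sym : symmetric e.

Lemma card_arcsC (X Y : {set T}) : #|arcs Y X| = #|arcs X Y|.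
Proof.
have swap_le (A B : {set T}) : #|arcs A B| <= #|arcs B A|.
  rewrite -(card_imset _ (can_inj (@swap_pairK T T))).
  apply: subset_leq_card; apply/subsetP => _ /imsetP[[a b] + ->].
  by rewrite !inE /= => /and3P[-> -> eab]; rewrite e_sym.
by apply/eqP; rewrite eqn_leq !swap_le.
Qed.

Lemma card_arcs_le (F F' X : {set T}) :
    {in F &, forall a b, e a b -> (a \notin F') || (b \notin F') -> (a \in X) || (b \in X)} ->
  #|arcs F F| <= #|arcs F' F'| + 2 * #|arcs X F|.
Proof.
move=> lost; have sub : arcs F F \subset arcs F' F' :|: (arcs X F :|: arcs F X).
  apply/subsetP => -[a b]; rewrite !inE => /and3P[/= aF bF eab]; rewrite aF bF eab !andbT.
  have [//|/=] := boolP ((a \in F') && (b \in F')); rewrite negb_and => /(lost a b aF bF eab).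
  by case/orP => ->; rewrite ?orbT.
apply: leq_trans (subset_leq_card sub) _.
apply: leq_trans (leq_card_setU _ _) _; rewrite leq_add2l.
by apply: leq_trans (leq_card_setU _ _) _; rewrite (card_arcsC X F) addnn mul2n.
Qed.

Lemma card_arcsD1 (F : {set T}) (w : T) :
  #|arcs F F| <= #|arcs (F :\ w) (F :\ w)| + 2 * #|nbrs_in F w|.
Proof.
have -> : #|nbrs_in F w| = #|arcs [set w] F| by rewrite card_arcs big_set1.
by apply: card_arcs_le => a b aF bF eab; rewrite !inE aF bF !andbT !negbK.
Qed.

Lemma hot_match (K U : {set T}) (w u : T) : u \in U -> e w u ->
  #|hot K U| <= #|hot (K :\ w) (U :\ u)| + deg e u.
Proof.
move=> uU ewu; apply: leq_trans (leq_card_setU _ [set x | e u x]).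
apply: subset_leq_card; apply/subsetP => x; rewrite !inE => /andP[xK /exists_inP[v vU exv]].
have [->|xw] := eqVneq x w; first by rewrite e_sym ewu orbT.
have [vu|vu] := eqVneq v u; first by rewrite e_sym -vu exv orbT.
by rewrite xK; apply/orP; left; apply/exists_inP; exists v; rewrite // !inE vu.
Qed.

Hypothesis e_irr : irreflexive e.

Lemma hot_expose (K U : {set T}) (w : T) : ~~ [exists u in U, e w u] ->
  #|hot K U| + #|nbrs_in (cold K U) w| <= #|hot (K :\ w) (w |: U)|.
Proof.
move=> wcold; have dis : [disjoint hot K U & nbrs_in (cold K U) w].
  rewrite -setI_eq0; apply/eqP/setP => x; rewrite !inE.
  by case: [exists u in U, e x u]; rewrite ?andbF.
move: (leq_card_setU (hot K U) (nbrs_in (cold K U) w)) => [_]; rewrite dis => /eqP <-.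
apply: subset_leq_card; apply/subsetP => x; rewrite !inE.
case/orP => [/andP[xK /exists_inP[v vU exv]]|/andP[/andP[xK _] ewx]].
  rewrite xK andbT; apply/andP; split.
    by apply: contraNneq wcold => xw; apply/exists_inP; exists v; rewrite -?xw.
  by apply/exists_inP; exists v; rewrite // inE vU orbT.
rewrite xK andbT; apply/andP; split; first by apply: contraTneq ewx => ->; rewrite e_irr.
by apply/exists_inP; exists w; rewrite ?setU11 // e_sym.
Qed.

Lemma arcs_cold_expose (K U : {set T}) (w : T) :
  #|arcs (cold K U) (cold K U)| <=
  #|arcs (cold (K :\ w) (w |: U)) (cold (K :\ w) (w |: U))|
  + 2 * (#|nbrs_in (cold K U) w| * maxdeg e).
Proof.
have lost c d : c \in cold K U -> d \in cold K U -> e c d ->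
    c \notin cold (K :\ w) (w |: U) ->
    (c \in nbrs_in (cold K U) w) || (d \in nbrs_in (cold K U) w).
  move=> cC dC ecd; rewrite !in_nbrs_in cC dC /=; move: cC; rewrite !inE => /andP[cK cU].
  rewrite cK andbT negb_and !negbK => /orP[/eqP cw|/exists_inP[v]].
    by rewrite -cw ecd orbT.
  rewrite in_setU1 => /predU1P[-> ecw|vU ecv]; first by rewrite e_sym ecw.
  by case/negP: cU; apply/exists_inP; exists v.
apply: leq_trans (card_arcs_le (X := nbrs_in (cold K U) w) _) _.
  move=> a b aC bC eab /orP[/(lost a b aC bC eab)//|/(lost b a bC aC)].
  by rewrite e_sym orbC => /(_ eab).
rewrite leq_add2l leq_mul2l card_arcs -sum_nat_const orbC leq_sum // => x _.
exact: card_nbrs_in_le_maxdeg.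
Qed.

End HotAndCold.

Section ExpBounds.
Variable R : realType.

Lemma expR_le_invB (x : R) : x < 1 -> expR x <= (1 - x)^-1.
Proof.
move=> x1; rewrite -{1}[x]opprK expRN lef_pV2 ?posrE ?expR_gt0 ?subr_gt0 //.
exact: expR_ge1Dx.
Qed.

Lemma expRN_le_invD (x : R) : 0 <= x -> expR (- x) <= (1 + x)^-1.
Proof.
move=> x0; rewrite expRN lef_pV2 ?posrE ?expR_gt0 ?expR_ge1Dx //.
by rewrite ltr_pwDl.
Qed.

(* The hypothesis on a and b is q / (1 + a) + (1 - q) / (1 - b) <= 1 with the
   denominators cleared; these fractions bound the two exponentials. *)
Lemma mix_expR_le1 (q a b : R) : 0 <= q <= 1 -> 0 <= a -> b < 1 ->
  b * (1 + a) <= q * (a + b) -> q * expR (- a) + (1 - q) * expR b <= 1.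
Proof.
move=> /andP[q0 q1] a0 b1 hab.
have A0 : 0 < 1 + a by lra.
have B0 : 0 < 1 - b by lra.
apply: (@le_trans _ _ (q / (1 + a) + (1 - q) / (1 - b))).
  by apply: lerD; apply: ler_wpM2l; rewrite ?subr_ge0 ?expRN_le_invD ?expR_le_invB.
have -> : q / (1 + a) + (1 - q) / (1 - b)
          = (q * (1 - b) + (1 - q) * (1 + a)) / ((1 + a) * (1 - b)).
  by field; rewrite !gt_eqF.
rewrite ler_pdivrMr ?mulr_gt0 // mul1r; nra.
Qed.

Lemma mix_expRN_le (q a b P P1 P0 : R) : 0 <= q <= 1 -> 0 <= a -> b < 1 ->
  b * (1 + a) <= q * (a + b) -> P + a <= P1 -> P - b <= P0 ->
  q * expR (- P1) + (1 - q) * expR (- P0) <= expR (- P).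
Proof.
move=> /andP[q0 q1] a0 b1 hab hP1 hP0.
have E1 : expR (- P1) <= expR (- P) * expR (- a) by rewrite -expRD ler_expR; lra.
have E0 : expR (- P0) <= expR (- P) * expR b by rewrite -expRD ler_expR; lra.
apply: le_trans (_ : expR (- P) * (q * expR (- a) + (1 - q) * expR b) <= _).
  rewrite mulrDr mulrCA [X in _ <= _ + X]mulrCA.
  by apply: lerD; apply: ler_wpM2l; rewrite ?subr_ge0.
rewrite ler_piMr ?expR_ge0 //; apply: mix_expR_le1 => //; exact/andP.
Qed.

End ExpBounds.

Section Potential.
Variables (R : realType) (T : finType) (e : rel T) (q : R).
Hypotheses (e_sym : symmetric e) (e_irr : irreflexive e).
Hypotheses (q_ge0 : 0 <= q) (q_le1 : q <= 1) (q_maxdeg : q * (maxdeg e)%:R <= 1).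

Definition potential (K U : {set T}) : R :=
  q / 6 * #|hot e K U|%:R + q ^+ 2 / 32 * #|arcs e (cold e K U) (cold e K U)|%:R.

Lemma q_card_nbrs_in_le1 (F : {set T}) (w : T) : q * #|nbrs_in e F w|%:R <= 1.
Proof. by apply: le_trans q_maxdeg; rewrite ler_wpM2l // ler_nat card_nbrs_in_le_maxdeg. Qed.

Lemma potential_leD (K U K' U' : {set T}) (dh da : R) :
  (#|hot e K U|%:R : R) <= #|hot e K' U'|%:R + dh ->
  (#|arcs e (cold e K U) (cold e K U)|%:R : R) <=
    #|arcs e (cold e K' U') (cold e K' U')|%:R + da ->
  potential K U <= potential K' U' + (q / 6 * dh + q ^+ 2 / 32 * da).
Proof.
have q6 : 0 <= q / 6 by rewrite divr_ge0.
have q32 : 0 <= q ^+ 2 / 32 by rewrite divr_ge0 ?exprn_ge0.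
move=> /(ler_wpM2l q6) hot_le /(ler_wpM2l q32) arcs_le; rewrite /potential; lra.
Qed.

Lemma potential_match (K U : {set T}) (w u : T) : u \in U -> e w u ->
  potential K U <= potential (K :\ w) (U :\ u) + 1 / 6.
Proof.
move=> uU ewu; have whot : [exists v in U, e w v] by apply/exists_inP; exists u.
have cold_sub : cold e K U \subset cold e (K :\ w) (U :\ u).
  exact: subset_trans (cold_subD1 K whot) (cold_subU e (K :\ w) (subD1set U u)).
have qdeg : q * (deg e u)%:R <= 1.
  by apply: le_trans q_maxdeg; rewrite ler_wpM2l // ler_nat deg_le_maxdeg.
apply: le_trans (potential_leD (K' := K :\ w) (U' := U :\ u) (dh := (deg e u)%:R)
                   (da := 0) _ _) _.
- by rewrite -natrD ler_nat; exact: hot_match.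
- by rewrite addr0 ler_nat subset_leq_card // arcsS.
- lra.
Qed.

Lemma potential_skip_hot (K U : {set T}) (w : T) : [exists u in U, e w u] ->
  potential K U <= potential (K :\ w) U + q / 6.
Proof.
move=> whot.
apply: le_trans (potential_leD (K' := K :\ w) (U' := U) (dh := 1) (da := 0) _ _) _.
- by rewrite natr1 ler_nat card_hotD1.
- by rewrite addr0 ler_nat subset_leq_card // arcsS // cold_subD1.
- lra.
Qed.

Lemma potential_expose (K U : {set T}) (w : T) : ~~ [exists u in U, e w u] ->
  potential K U + 5 / 48 * (q * #|nbrs_in e (cold e K U) w|%:R)
  <= potential (K :\ w) (w |: U).
Proof.
move=> wcold; set f := #|nbrs_in e (cold e K U) w|%:R; rewrite -lerBrDr.
apply: le_trans (potential_leD (K' := K :\ w) (U' := w |: U) (dh := - f)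
                   (da := 2 * (f * (maxdeg e)%:R)) _ _) _.
- by rewrite lerBrDr -natrD ler_nat; exact: hot_expose.
- by rewrite -natrM -natrM -natrD ler_nat; exact: arcs_cold_expose.
- have : 0 <= q * f * (1 - q * (maxdeg e)%:R) by rewrite mulr_ge0 ?subr_ge0 ?mulr_ge0.
  lra.
Qed.

Lemma potential_skip_cold (K U : {set T}) (w : T) : ~~ [exists u in U, e w u] ->
  potential K U
  <= potential (K :\ w) U + q * (q * #|nbrs_in e (cold e K U) w|%:R) / 16.
Proof.
move=> wcold; set f := #|nbrs_in e (cold e K U) w|%:R.
apply: le_trans (potential_leD (K' := K :\ w) (U' := U) (dh := 0) (da := 2 * f) _ _) _.
- by rewrite addr0 ler_nat subset_leq_card // hot_subD1.
- by rewrite coldD1 -natrM -natrD ler_nat; exact: card_arcsD1.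
- lra.
Qed.

Lemma potential_step_hot (K U : {set T}) (w u : T) : u \in U -> e w u ->
  q * expR (- (potential (K :\ w) (U :\ u) + 1 / 2))
  + (1 - q) * expR (- potential (K :\ w) U) <= expR (- potential K U).
Proof.
move=> uU ewu; have whot : [exists v in U, e w v] by apply/exists_inP; exists u.
have := potential_match K uU ewu; have := potential_skip_hot K whot.
have := mulr_ge0 q_ge0 q_ge0; move: q_ge0 q_le1 => q0 q1 qq skip matched.
by apply: (mix_expRN_le (a := 1 / 3) (b := q / 6)); rewrite ?q0 ?q1 //; lra.
Qed.

Lemma potential_step_cold (K U : {set T}) (w : T) : ~~ [exists u in U, e w u] ->
  q * expR (- potential (K :\ w) (w |: U))
  + (1 - q) * expR (- potential (K :\ w) U) <= expR (- potential K U).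
Proof.
move=> wcold; have := potential_expose K wcold; have := potential_skip_cold K wcold.
have y1 := q_card_nbrs_in_le1 (cold e K U) w.
set y := q * #|nbrs_in e (cold e K U) w|%:R in y1 *.
have y0 : 0 <= y by rewrite mulr_ge0.
have qqy : 0 <= q * q * y by rewrite !mulr_ge0.
have qyy : 0 <= q * y * (32 - 5 * y) by apply: mulr_ge0; [rewrite mulr_ge0 | lra].
move: q_ge0 q_le1 => q0 q1 skip expose.
by apply: (mix_expRN_le (a := 5 / 48 * y) (b := q * y / 16)); rewrite ?q0 ?q1 //; nra.
Qed.

Lemma potential0 (U : {set T}) : potential set0 U = 0.
Proof.
have hot0 : hot e set0 U = set0 by apply/setP => x; rewrite !inE.
have cold0 : cold e set0 U = set0 by apply/setP => x; rewrite !inE.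
have arcs0 : arcs e set0 set0 = set0 by apply/setP => x; rewrite !inE.
by rewrite /potential hot0 cold0 arcs0 !cards0 !mulr0 addr0.
Qed.

Lemma potential_init (K : {set T}) :
  potential K set0 = q ^+ 2 / 32 * #|arcs e K K|%:R.
Proof.
have no_nbr x : [exists u in set0, e x u] = false by apply/exists_inP => -[u]; rewrite inE.
have hot0 : hot e K set0 = set0 by apply/setP => x; rewrite in_set no_nbr andbF inE.
have coldK : cold e K set0 = K by apply/setP => x; rewrite in_set no_nbr andbT.
by rewrite /potential hot0 coldK cards0 mulr0 add0r.
Qed.

Lemma greedy_size_expect (s : seq T) (U : {set T}) : uniq s ->
  bern_expect q [set:: s] (fun S => expR (- ((greedy_size e s U S)%:R / 2)))
  <= expR (- potential [set:: s] U).
Proof.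
elim: s U => [|w s IH] U.
  by rewrite set_nil bern_expect0 potential0 mul0r.
rewrite cons_uniq => /andP[ws uniq_s].
have wK : w \notin [set:: s] by rewrite inE.
have skipped (V : {set T}) :
    bern_expect q [set:: s] (fun S => expR (- ((greedy_size e (w :: s) V S)%:R / 2)))
    = bern_expect q [set:: s] (fun S => expR (- ((greedy_size e s V S)%:R / 2))).
  apply: eq_bern_expect => S /subsetP Ss /=.
  by rewrite ifN //; apply: contra wK => /Ss.
rewrite set_cons bern_expectU1 // skipped /=.
case: pickP => [u /andP[uU ewu]|noU].
  under eq_bern_expect => S _ do rewrite setU11 greedy_sizeU1 //.
  have := potential_step_hot (w |: [set:: s]) uU ewu; rewrite !setU1K //.
  apply: le_trans; apply: lerD; apply: ler_wpM2l; rewrite ?subr_ge0 //; last exact: IH.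
  under eq_bern_expect => S _ do rewrite -addn1 natrD mulrDl opprD expRD mulrC.
  rewrite bern_expectZ opprD expRD mulrC ler_wpM2r ?expR_ge0 //; exact: IH.
under eq_bern_expect => S _ do rewrite setU11 greedy_sizeU1 //.
have wcold : ~~ [exists u in U, e w u].
  by apply/exists_inP => -[u uU ewu]; have := noU u; rewrite /= uU ewu.
have := potential_step_cold (w |: [set:: s]) wcold; rewrite !setU1K //.
apply: le_trans; apply: lerD; apply: ler_wpM2l; rewrite ?subr_ge0 //; exact: IH.
Qed.

Lemma greedy_size_expect_nedges :
  bern_expect q setT (fun S => expR (- ((greedy_size e (enum [set: T]) set0 S)%:R / 2)))
  <= expR (- (q ^+ 2 / 32 * (nedges e)%:R)).
Proof.
have := greedy_size_expect set0 (enum_uniq [set: T]).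
rewrite set_enum potential_init => /le_trans; apply; rewrite ler_expR lerN2.
by rewrite ler_wpM2l ?divr_ge0 ?exprn_ge0 // ler_nat nedges_le_card_arcs.
Qed.

End Potential.

Theorem lemma7p2 (R : realType) (T : finType) (e : rel T)
    (e_sym : symmetric e) (e_irr : irreflexive e) (q : R)
    (q_ge0 : 0 <= q) (q_le1 : q <= 1)
    (q_le_invDelta : q * (maxdeg e)%:R <= 1) :
  1 - expR (- (q ^+ 2 * (nedges e)%:R / 200))
  <= prob_event q (fun S => has_matching_ge e S (q ^+ 2 * (nedges e)%:R / 20)).
Proof.
have expect_le := greedy_size_expect_nedges e_sym e_irr q_ge0 q_le1 q_le_invDelta.
apply: le_trans (prob_event_ge_markov q_ge0 q_le1 (a := q ^+ 2 * (nedges e)%:R / 40)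
  (X := fun S => (greedy_size e (enum [set: T]) set0 S)%:R / 2) _) => [|S greedy_ge].
  rewrite lerD2l lerN2; apply: le_trans (ler_wpM2l (expR_ge0 _) expect_le) _.
  rewrite -expRD ler_expR; have := mulr_ge0 (exprn_ge0 2 q_ge0) (ler0n R (nedges e)).
  lra.
by apply: has_matching_ge_greedy (enum_uniq _) _; lra.
Qed.
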